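(* Let $\eta_0\in[0,1]$ and let $p(X_i,X_j|M_{ij},P)$, for $(ij)\in\{(12),(23),(13)\}$ and $X_i,X_j\in\{0,1\}$, be arbitrary probability distributions on $\{0,1\}^2$; set $w_{12}=p(X_1\neq X_2|M_{12},P)$, $w_{23}=p(X_2\neq X_3|M_{23},P)$, $w_{13}=p(X_1\neq X_3|M_{13},P)$. Then at most one of the following four inequalities can hold: $w_{12}+w_{23}+w_{13}>3-\eta_0$; $w_{12}-w_{23}-w_{13}>1-\eta_0$; $w_{23}-w_{13}-w_{12}>1-\eta_0$; $w_{13}-w_{12}-w_{23}>1-\eta_0$. That is, no such set of distributions violates two of the four noncontextuality inequalities $R_3\le 3-\eta_0$, $R_0\le 1-\eta_0$, $R_1\le1-\eta_0$, $R_2\le 1-\eta_0$ simultaneously.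
   Context: Here $p(X_i\neq X_j|M_{ij},P)=p(0,1|M_{ij},P)+p(1,0|M_{ij},P)$ is the probability of anticorrelated outcomes in the joint measurement $M_{ij}$, and $R_3=w_{12}+w_{23}+w_{13}$, $R_0=w_{12}-w_{23}-w_{13}$, $R_1=w_{23}-w_{13}-w_{12}$, $R_2=w_{13}-w_{12}-w_{23}$. The number $\eta_0$ plays the role of the common predictability of the three binary measurements. *)

From mathcomp Require Import all_boot all_order all_algebra.
Set Implicit Arguments. Unset Strict Implicit. Unset Printing Implicit Defensive.
Import Order.TTheory GRing.Theory Num.Theory.
Local Open Scope ring_scope.

(* A probability distribution on {0,1}^2 : p x y = p(X_i = x, X_j = y | M_ij, P),
   with booleans false = 0, true = 1. *)
Definition is_dist2 (R : realFieldType) (p : bool -> bool -> R) : Prop :=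
  (forall x y, 0 <= p x y) /\
  p false false + p false true + p true false + p true true = 1.

Definition anticorr (R : realFieldType) (p : bool -> bool -> R) : R :=
  p false true + p true false.

(* The four noncontextuality inequalities' violations, indexed by 'I_4:
   0 : R_3 > 3 - eta0, 1 : R_0 > 1 - eta0, 2 : R_1 > 1 - eta0, 3 : R_2 > 1 - eta0 *)
Definition violation (R : realFieldType) (eta0 w12 w23 w13 : R) (k : 'I_4) : Prop :=
  match val k with
  | 0%N => w12 + w23 + w13 > 3 - eta0
  | 1%N => w12 - w23 - w13 > 1 - eta0
  | 2%N => w23 - w13 - w12 > 1 - eta0
  | _ => w13 - w12 - w23 > 1 - eta0
  end.

From mathcomp Require Import all_boot all_order all_algebra.
From mathcomp Require Import lra.
Import Order.TTheory GRing.Theory Num.Theory.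
Set Implicit Arguments. Unset Strict Implicit. Unset Printing Implicit Defensive.
Local Open Scope ring_scope.

(* Adding two of the four inequalities makes all but one [w_ij] cancel:
   [R_3 + R_0 = 2 w_12], [R_0 + R_1 = -2 w_13], and similarly for the other
   pairs.  Since [0 <= w_ij <= 1] and [eta0 <= 1], such a sum is at most the
   sum of the two right-hand sides ([4 - 2 eta0 >= 2] for pairs involving
   [R_3], [2 - 2 eta0 >= 0] otherwise), so no two can be violated together. *)

Lemma anticorr_in01 (R : realFieldType) (p : bool -> bool -> R) :
  is_dist2 p -> 0 <= anticorr p <= 1.
Proof.
move=> [p_ge0 p_sum1]; rewrite /anticorr.
have := p_ge0 false false; have := p_ge0 false true.
have := p_ge0 true false; have := p_ge0 true true.
move=> *; apply/andP; split; lra.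
Qed.

Lemma violation_inj (R : realFieldType) (eta0 w12 w23 w13 : R) (k l : 'I_4) :
  eta0 <= 1 ->
  0 <= w12 <= 1 -> 0 <= w23 <= 1 -> 0 <= w13 <= 1 ->
  violation eta0 w12 w23 w13 k -> violation eta0 w12 w23 w13 l -> k = l.
Proof.
move=> eta0_le1 /andP[? ?] /andP[? ?] /andP[? ?].
case: k l => [[|[|[|[|k]]]] ?] // [[|[|[|[|l]]]] ?] //;
  rewrite /violation /= => ? ?; first [by apply: val_inj | exfalso; lra].
Qed.

Theorem mainTheorem5 (R : realFieldType) (eta0 : R)
  (p12 p23 p13 : bool -> bool -> R) :
  0 <= eta0 <= 1 ->
  is_dist2 p12 -> is_dist2 p23 -> is_dist2 p13 ->
  forall k l : 'I_4, k != l ->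
  ~ (violation eta0 (anticorr p12) (anticorr p23) (anticorr p13) k /\
     violation eta0 (anticorr p12) (anticorr p23) (anticorr p13) l).
Proof.
move=> /andP[_ eta0_le1] d12 d23 d13 k l /eqP k_neq_l [vk vl].
apply: k_neq_l.
exact: (violation_inj eta0_le1 (anticorr_in01 d12) (anticorr_in01 d23)
          (anticorr_in01 d13) vk vl).
Qed.
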